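(* Assume the Setting below with $q<n\le2p$. Fix an integer $N\in[2p,4p]$. Then for every $\xi_*\in(0,E_0)$ such that $\Lambda_n(\xi_* )\neq0$ and $\Lambda_n'(\xi_* )<0$ there exists a solution $v_*(t)$ of $du/dt=\sum_{k=n}^Nt^{-k/q}\Lambda_k(u)$, defined for all large $t$, with $v_*(t)=\xi_*+O(t^{-1/q})$ as $t\to\infty$.
   Context: Setting: for the Itô system $d{\bf z}={\bf a}({\bf z},t)dt+{\bf A}({\bf z},t)d{\bf w}$ in $\mathbb R^2$ (${\bf w}$ a 2D Wiener process) with deterministic smooth coefficients, ${\bf a}(0,t)\equiv0$, asymptotic expansions ${\bf a}\sim{\bf a}_0+\sum_{k\ge1}t^{-k/q}{\bf a}_k$, ${\bf A}\sim\sum_{k\ge1}t^{-k/q}{\bf A}_k$ ($q\in\mathbb Z_+$) uniformly near the origin, ${\bf a}_0=(\partial_yH_0,-\partial_xH_0)^T$ with $H_0=|{\bf z}|^2/2+O(|{\bf z}|^3)$ whose level sets $\{H_0=E\}$, $E\in(0,E_0]$, near the origin are closed curves carrying periodic solutions $(x_*,y_* )(t,E)$ (normalized $x_*(0,E)>0$, $y_*(0,E)=0$) of frequency $\nu(E)=1+O(E)$, $\nu\neq0$; $p\in\mathbb Z_+$ minimal with ${\bf A}_p(0)\neq0$. With energy–angle variables $x=X(\varphi,E)=x_*(\varphi/\nu(E),E)$, $y=Y(\varphi,E)=y_*(\varphi/\nu(E),E)$, inverse $E=I(x,y)$, $\varphi=\Phi(x,y)$, and generator $LU=\partial_tU+(\nabla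 U)^T{\bf a}+\frac12\mathrm{tr}({\bf A}^T{\bf H}(U){\bf A})$, the averaged coefficients $\Lambda_k(E)$ and $v_k(E,\varphi)$ ($2\pi$-periodic, zero $\varphi$-mean), $k\ge1$, are uniquely determined order by order by $L[V_N(I,\Phi,t)]=\sum_{k=1}^Nt^{-k/q}\Lambda_k(V_N)+O(t^{-(N+1)/q})$ for every $N$, where $V_N=E+\sum_{k=1}^Nt^{-k/q}v_k(E,\varphi)$. $n\le2p$ is the smallest index with $\Lambda_k\equiv0$ for $k<n$, $\Lambda_n\not\equiv0$. *)

From Stdlib Require Import Reals.
From Coquelicot Require Import Coquelicot.
Open Scope R_scope.

Definition tpow (t : R) (k q : nat) : R := Rpower t (- (INR k / INR q)).

Definition avg_rhs (Lam : nat -> R -> R) (q n N : nat) (t u : R) : R :=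
  sum_n_m (fun k => tpow t k q * Lam k u) n N.

Definition smooth_on (f : R -> R) (a b : R) : Prop :=
  forall (m : nat) (x : R), a < x < b -> ex_derive_n f m x.

(* Since n > q, the substitution s = t^(-1/q) turns the averaged equation into
   dw/ds = - q sum_k s^(k-q-1) Lam_k(w), whose right-hand side stays regular up to s = 0.
   Picard iteration from w(0) = xi on a short interval (0, h) yields a solution with
   |w(s) - xi| <= C s, and v(t) = w(t^(-1/q)) solves the averaged equation for t > h^(-q). *)

From Stdlib Require Import Reals Lra Lia.
From Coquelicot Require Import Coquelicot.
Open Scope R_scope.

Lemma lipschitz_continuous (f : R -> R) (r K x : R) :
  (forall a b, Rabs a < r -> Rabs b < r -> Rabs (f a - f b) <= K * Rabs (a - b)) ->
  0 <= K -> Rabs x < r -> continuous f x.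
Proof.
  intros Hf HK Hx.
  apply filterlim_locally. intros eps.
  assert (Hd : 0 < Rmin (r - Rabs x) (eps / (K + 1))).
  { apply Rmin_pos; [lra|]. apply Rdiv_lt_0_compat; [apply cond_pos | lra]. }
  exists (mkposreal _ Hd). intros y Hy. change R in y.
  change (Rabs (y - x) < Rmin (r - Rabs x) (eps / (K + 1))) in Hy.
  change (Rabs (f y - f x) < eps).
  pose proof (Rmin_l (r - Rabs x) (eps / (K + 1))).
  pose proof (Rmin_r (r - Rabs x) (eps / (K + 1))).
  assert (Hy' : Rabs y < r).
  { pose proof (Rabs_triang x (y - x)) as Ht.
    replace (x + (y - x)) with y in Ht by ring. lra. }
  assert (K * Rabs (y - x) <= K * (eps / (K + 1))) by (apply Rmult_le_compat_l; lra).
  assert (K * (eps / (K + 1)) < eps).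
  { apply (Rmult_lt_reg_r (K + 1)); [lra|].
    replace (K * (eps / (K + 1)) * (K + 1)) with (K * eps) by (field; lra).
    pose proof (cond_pos eps). nra. }
  pose proof (Hf y x Hy' Hx). lra.
Qed.

Lemma Rabs_le_between_0 (s u : R) : Rmin 0 s <= u <= Rmax 0 s -> Rabs u <= Rabs s.
Proof.
  unfold Rmin, Rmax. destruct (Rle_dec 0 s); intros Hu; unfold Rabs;
  repeat destruct Rcase_abs; lra.
Qed.

Lemma abs_RInt_le_const_Rabs (f : R -> R) (a b B : R) :
  ex_RInt f a b -> (forall s, Rmin a b <= s <= Rmax a b -> Rabs (f s) <= B) ->
  Rabs (RInt f a b) <= Rabs (b - a) * B.
Proof.
  intros Hf HB. destruct (Rle_dec a b) as [Hab|Hab].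
  - rewrite Rmin_left, Rmax_right in HB by lra.
    rewrite (Rabs_right (b - a)) by lra. apply abs_RInt_le_const; auto.
  - rewrite Rmin_right, Rmax_left in HB by lra.
    rewrite <- (opp_RInt_swap f b a) by (apply ex_RInt_swap; auto).
    change (Rabs (- RInt f b a) <= Rabs (b - a) * B).
    rewrite Rabs_Ropp, (Rabs_left (b - a)), Ropp_minus_distr by lra.
    apply abs_RInt_le_const; auto; [lra | apply ex_RInt_swap; auto].
Qed.

Lemma RInt_minus_R (f g : R -> R) (a b : R) : ex_RInt f a b -> ex_RInt g a b ->
  RInt (fun x => f x - g x) a b = RInt f a b - RInt g a b.
Proof. apply (RInt_minus (V := R_CompleteNormedModule)). Qed.

Lemma ex_RInt_minus_R (f g : R -> R) (a b : R) : ex_RInt f a b -> ex_RInt g a b ->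
  ex_RInt (fun x => f x - g x) a b.
Proof. apply (ex_RInt_minus (V := R_CompleteNormedModule)). Qed.

Lemma RInt_minus_Chasles (f : R -> R) (a b : R) : (forall s, continuous f s) ->
  RInt f 0 a - RInt f 0 b = RInt f b a.
Proof.
  intros Hc.
  assert (He : forall c d, ex_RInt f c d)
    by (intros; apply (ex_RInt_continuous (V := R_CompleteNormedModule)); auto).
  rewrite <- (RInt_Chasles f b 0 a), <- (opp_RInt_swap f 0 b) by auto.
  change (RInt f 0 a - RInt f 0 b = - RInt f 0 b + RInt f 0 a). ring.
Qed.

Lemma is_lim_seq_dist_le (u : nat -> R) (l c B : R) :
  is_lim_seq u l -> (forall m, Rabs (u m - c) <= B) -> Rabs (l - c) <= B.
Proof.
  intros Hu HB.
  apply (is_lim_seq_le (fun m => Rabs (u m - c)) (fun _ => B) (Rabs (l - c)) B HB).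
  - apply (is_lim_seq_abs _ (l - c)), is_lim_seq_minus'; auto. apply is_lim_seq_const.
  - apply is_lim_seq_const.
Qed.

Lemma eq0_of_geometric_bound (D K : R) : (forall j, Rabs D <= K * (1/2) ^ j) -> D = 0.
Proof.
  intros H. destruct (Req_dec D 0) as [|HD]; auto. exfalso.
  assert (HD' : 0 < Rabs D) by (apply Rabs_pos_lt; auto).
  assert (HK : 0 < K) by (specialize (H 0%nat); simpl in H; lra).
  destruct (pow_lt_1_zero (1/2) ltac:(rewrite Rabs_right; lra) (Rabs D / K)) as [j Hj].
  { apply Rdiv_lt_0_compat; auto. }
  specialize (Hj j (le_n j)). specialize (H j).
  rewrite Rabs_right in Hj by (apply Rle_ge, pow_le; lra).
  apply (Rmult_lt_compat_l K) in Hj; auto.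
  replace (K * (Rabs D / K)) with (Rabs D) in Hj by (field; lra). lra.
Qed.

Section Picard.

Variables (F : R -> R -> R) (x0 M L h : R).
Hypothesis h_pos : 0 < h.
Hypothesis L_ge0 : 0 <= L.
Hypothesis Lh_le : L * h <= 1/2.
Hypothesis F_bounded : forall s u, Rabs (F s u) <= M.
Hypothesis F_lipschitz : forall s u u', Rabs (F s u - F s u') <= L * Rabs (u - u').
Hypothesis F_continuous :
  forall (g : R -> R) s, continuous g s -> continuous (fun s => F s (g s)) s.

Fixpoint picard_iter (j : nat) : R -> R :=
  match j with
  | O => fun _ => x0
  | S j => fun s => x0 + RInt (fun u => F u (picard_iter j u)) 0 s
  end.

Let M_ge0 : 0 <= M.
Proof. pose proof (F_bounded 0 0). pose proof (Rabs_pos (F 0 0)). lra. Qed.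

Lemma picard_iter_lipschitz j a b :
  Rabs (picard_iter j a - picard_iter j b) <= M * Rabs (a - b).
Proof.
  revert a b. induction j as [|j IHj]; intros a b; simpl.
  - rewrite Rminus_diag, Rabs_R0. apply Rmult_le_pos; [lra | apply Rabs_pos].
  - set (g := fun u => F u (picard_iter j u)).
    assert (Hg : forall s, continuous g s).
    { intros s. apply F_continuous, (lipschitz_continuous _ (Rabs s + 1) M); auto; lra. }
    replace (x0 + RInt g 0 a - (x0 + RInt g 0 b)) with (RInt g 0 a - RInt g 0 b) by ring.
    rewrite RInt_minus_Chasles, Rmult_comm by auto.
    apply abs_RInt_le_const_Rabs; [|intros; apply F_bounded].
    apply (ex_RInt_continuous (V := R_CompleteNormedModule)); auto.
Qed.

Lemma picard_iter_field_continuous j s : continuous (fun u => F u (picard_iter j u)) s.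
Proof.
  apply F_continuous, (lipschitz_continuous _ (Rabs s + 1) M); try lra.
  intros; apply picard_iter_lipschitz.
Qed.

Lemma ex_RInt_picard_iter_field j a b : ex_RInt (fun u => F u (picard_iter j u)) a b.
Proof.
  apply (ex_RInt_continuous (V := R_CompleteNormedModule)).
  intros; apply picard_iter_field_continuous.
Qed.

(* The contraction factor [L * |s| <= 1/2] halves the distance at each step. *)
Lemma picard_iter_step j s : Rabs s <= h ->
  Rabs (picard_iter (S j) s - picard_iter j s) <= M * h * (1/2) ^ j.
Proof.
  intros Hs. revert s Hs. induction j as [|j IHj]; intros s Hs.
  - simpl. rewrite Rplus_minus_l.
    apply Rle_trans with (Rabs (s - 0) * M).
    + apply abs_RInt_le_const_Rabs; auto.
      apply (ex_RInt_continuous (V := R_CompleteNormedModule)).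
      intros; apply F_continuous, continuous_const.
    + rewrite Rminus_0_r. nra.
  - change (Rabs (x0 + RInt (fun u => F u (picard_iter (S j) u)) 0 s -
                  (x0 + RInt (fun u => F u (picard_iter j u)) 0 s)) <= M * h * (1/2) ^ S j).
    rewrite Rminus_plus_l_l, <- RInt_minus_R by apply ex_RInt_picard_iter_field.
    apply Rle_trans with (Rabs (s - 0) * (L * (M * h * (1/2) ^ j))).
    + apply abs_RInt_le_const_Rabs.
      { apply ex_RInt_minus_R; apply ex_RInt_picard_iter_field. }
      intros u Hu. eapply Rle_trans; [apply F_lipschitz|].
      apply Rmult_le_compat_l; auto. apply IHj.
      pose proof (Rabs_le_between_0 s u Hu). lra.
    + rewrite Rminus_0_r. simpl.
      assert (0 <= M * h * (1/2) ^ j) by (apply Rmult_le_pos; [nra | apply pow_le; lra]).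
      assert (Rabs s * L <= 1/2) by nra.
      nra.
Qed.

Lemma picard_iter_cauchy j m s : Rabs s <= h ->
  Rabs (picard_iter (j + m) s - picard_iter j s) <= 2 * M * h * (1/2) ^ j * (1 - (1/2) ^ m).
Proof.
  intros Hs. induction m as [|m IHm].
  - rewrite Nat.add_0_r, Rminus_diag, Rabs_R0. simpl. lra.
  - rewrite Nat.add_succ_r.
    pose proof (Rabs_triang (picard_iter (S (j + m)) s - picard_iter (j + m) s)
                            (picard_iter (j + m) s - picard_iter j s)).
    pose proof (picard_iter_step (j + m) s Hs) as Hstep. rewrite pow_add in Hstep.
    replace (2 * M * h * (1/2) ^ j * (1 - (1/2) ^ S m)) with
      (M * h * ((1/2) ^ j * (1/2) ^ m) + 2 * M * h * (1/2) ^ j * (1 - (1/2) ^ m))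
      by (simpl; field).
    replace (picard_iter (S (j + m)) s - picard_iter j s) with
      ((picard_iter (S (j + m)) s - picard_iter (j + m) s) +
       (picard_iter (j + m) s - picard_iter j s)) by ring.
    lra.
Qed.

Definition picard_lim (s : R) : R := real (Lim_seq (fun j => picard_iter j s)).

Lemma picard_iter_cvg s : Rabs s <= h ->
  is_lim_seq (fun j => picard_iter j s) (picard_lim s).
Proof.
  intros Hs. apply Lim_seq_correct', ex_lim_seq_cauchy_corr. intros eps.
  set (K := 2 * M * h).
  assert (HK : 0 <= K) by (unfold K; nra).
  destruct (pow_lt_1_zero (1/2) ltac:(rewrite Rabs_right; lra) (eps / (2 * K + 1))) as [j0 Hj0].
  { apply Rdiv_lt_0_compat; [apply cond_pos | lra]. }
  specialize (Hj0 j0 (le_n j0)). rewrite Rabs_right in Hj0 by (apply Rle_ge, pow_le; lra).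
  assert (Hsmall : (2 * K + 1) * (1/2) ^ j0 < eps).
  { apply (Rmult_lt_compat_l (2 * K + 1)) in Hj0; [|lra].
    replace ((2 * K + 1) * (eps / (2 * K + 1))) with (pos eps) in Hj0 by (field; lra).
    exact Hj0. }
  assert (Hfar : forall k, (j0 <= k)%nat ->
            Rabs (picard_iter k s - picard_iter j0 s) <= K * (1/2) ^ j0).
  { intros k Hk. replace k with (j0 + (k - j0))%nat by lia.
    eapply Rle_trans; [apply picard_iter_cauchy; auto|].
    pose proof (pow_le (1/2) (k - j0) ltac:(lra)).
    assert (0 <= K * (1/2) ^ j0) by (apply Rmult_le_pos; [lra | apply pow_le; lra]).
    unfold K in *. nra. }
  exists j0. intros a b Ha Hb.
  pose proof (Hfar a Ha). pose proof (Hfar b Hb).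
  pose proof (Rabs_triang (picard_iter a s - picard_iter j0 s)
                          (- (picard_iter b s - picard_iter j0 s))).
  rewrite Rabs_Ropp in *.
  replace (picard_iter a s - picard_iter j0 s + - (picard_iter b s - picard_iter j0 s))
    with (picard_iter a s - picard_iter b s) in * by ring.
  replace ((2 * K + 1) * (1/2) ^ j0) with (2 * (K * (1/2) ^ j0) + (1/2) ^ j0) in Hsmall by ring.
  pose proof (pow_le (1/2) j0 ltac:(lra)). lra.
Qed.

Lemma picard_lim_tail s j : Rabs s <= h ->
  Rabs (picard_lim s - picard_iter j s) <= 2 * M * h * (1/2) ^ j.
Proof.
  intros Hs. apply (is_lim_seq_dist_le (fun m => picard_iter (m + j) s)).
  - apply (is_lim_seq_incr_n (fun m => picard_iter m s) j), picard_iter_cvg; auto.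
  - intros m. rewrite Nat.add_comm. eapply Rle_trans; [apply picard_iter_cauchy; auto|].
    pose proof (pow_le (1/2) m ltac:(lra)).
    assert (0 <= 2 * M * h * (1/2) ^ j) by (apply Rmult_le_pos; [nra | apply pow_le; lra]).
    nra.
Qed.

Lemma picard_lim_lipschitz a b : Rabs a <= h -> Rabs b <= h ->
  Rabs (picard_lim a - picard_lim b) <= M * Rabs (a - b).
Proof.
  intros Ha Hb. rewrite <- (Rminus_0_r (picard_lim a - picard_lim b)).
  apply (is_lim_seq_dist_le (fun m => picard_iter m a - picard_iter m b)).
  - apply is_lim_seq_minus'; apply picard_iter_cvg; auto.
  - intros m. rewrite Rminus_0_r. apply picard_iter_lipschitz.
Qed.

Lemma picard_lim_0 : picard_lim 0 = x0.
Proof.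
  apply Rminus_diag_uniq, Rabs_eq_0, Rle_antisym; [|apply Rabs_pos].
  apply (is_lim_seq_dist_le (fun m => picard_iter m 0)).
  - apply picard_iter_cvg. rewrite Rabs_R0. lra.
  - intros [|m]; simpl.
    + rewrite Rminus_diag, Rabs_R0. lra.
    + rewrite RInt_point. change (Rabs (x0 + 0 - x0) <= 0).
      rewrite Rplus_minus_l, Rabs_R0. lra.
Qed.

Lemma picard_lim_field_continuous s : Rabs s < h ->
  continuous (fun u => F u (picard_lim u)) s.
Proof.
  intros Hs. apply F_continuous, (lipschitz_continuous _ h M); auto.
  intros; apply picard_lim_lipschitz; lra.
Qed.

Lemma ex_RInt_picard_lim_field s : Rabs s < h -> ex_RInt (fun u => F u (picard_lim u)) 0 s.
Proof.
  intros Hs. apply (ex_RInt_continuous (V := R_CompleteNormedModule)). intros u Hu.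
  apply picard_lim_field_continuous. pose proof (Rabs_le_between_0 s u Hu). lra.
Qed.

Lemma picard_lim_fixpoint s : Rabs s < h ->
  picard_lim s = x0 + RInt (fun u => F u (picard_lim u)) 0 s.
Proof.
  intros Hs. apply Rminus_diag_uniq, (eq0_of_geometric_bound _ (2 * M * h)). intros j.
  set (g := fun u => F u (picard_iter j u)). set (g' := fun u => F u (picard_lim u)).
  replace (picard_lim s - (x0 + RInt g' 0 s)) with
    ((picard_lim s - picard_iter (S j) s) + (RInt g 0 s - RInt g' 0 s))
    by (simpl; fold g; ring).
  eapply Rle_trans; [apply Rabs_triang|].
  pose proof (picard_lim_tail s (S j) ltac:(lra)) as Htail.
  pose proof (ex_RInt_picard_iter_field j 0 s) as Hg.
  pose proof (ex_RInt_picard_lim_field s Hs) as Hg'.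
  rewrite <- (RInt_minus_R g g' 0 s Hg Hg').
  assert (Hint : Rabs (RInt (fun u => g u - g' u) 0 s) <=
                 Rabs (s - 0) * (L * (2 * M * h * (1/2) ^ j))).
  { apply abs_RInt_le_const_Rabs.
    { apply ex_RInt_minus_R; auto. }
    intros u Hu. eapply Rle_trans; [apply F_lipschitz|]. apply Rmult_le_compat_l; auto.
    rewrite Rabs_minus_sym. apply picard_lim_tail.
    pose proof (Rabs_le_between_0 s u Hu). lra. }
  rewrite Rminus_0_r in Hint.
  replace (2 * M * h * (1/2) ^ S j) with (1/2 * (2 * M * h * (1/2) ^ j)) in Htail
    by (simpl; ring).
  assert (0 <= 2 * M * h * (1/2) ^ j) by (apply Rmult_le_pos; [nra | apply pow_le; lra]).
  assert (Rabs s * (L * (2 * M * h * (1/2) ^ j)) <= 1/2 * (2 * M * h * (1/2) ^ j)).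
  { rewrite <- Rmult_assoc. apply Rmult_le_compat_r; nra. }
  lra.
Qed.

Lemma is_derive_picard_lim s : 0 < s < h -> is_derive picard_lim s (F s (picard_lim s)).
Proof.
  intros Hs.
  assert (Hnear : forall P : R -> Prop, (forall t, Rabs t < h -> P t) -> locally s P).
  { intros P HP. exists (mkposreal (h - s) ltac:(lra)). intros t Ht.
    change (Rabs (t - s) < h - s) in Ht. apply HP.
    apply Rabs_lt_between in Ht. apply Rabs_def1; lra. }
  assert (Hint : is_derive (fun t => RInt (fun u => F u (picard_lim u)) 0 t) s
                           (F s (picard_lim s))).
  { apply (is_derive_RInt (V := R_NormedModule) (fun u => F u (picard_lim u))
                          (fun t => RInt (fun u => F u (picard_lim u)) 0 t) 0 s).
    - apply Hnear. intros t Ht. apply (RInt_correct (V := R_CompleteNormedModule)).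
      apply ex_RInt_picard_lim_field; auto.
    - apply picard_lim_field_continuous. rewrite Rabs_right; lra. }
  pose proof (is_derive_plus (K := R_AbsRing) (V := R_NormedModule) _ _ s _ _
                (is_derive_const x0 s) Hint) as Hsum.
  rewrite plus_zero_l in Hsum.
  refine (is_derive_ext_loc _ _ _ _ _ Hsum).
  apply Hnear. intros t Ht. symmetry. apply picard_lim_fixpoint; auto.
Qed.

End Picard.

Lemma picard_existence (F : R -> R -> R) (x0 M L h : R) :
  0 < h -> 0 <= L -> L * h <= 1/2 ->
  (forall s u, Rabs (F s u) <= M) ->
  (forall s u u', Rabs (F s u - F s u') <= L * Rabs (u - u')) ->
  (forall (g : R -> R) s, continuous g s -> continuous (fun s => F s (g s)) s) ->
  exists w : R -> R, forall s, 0 < s < h ->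
    is_derive w s (F s (w s)) /\ Rabs (w s - x0) <= M * s.
Proof.
  intros Hh HL HLh HFb HFl HFc. exists (picard_lim F x0). intros s Hs. split.
  - apply (is_derive_picard_lim F x0 M L h); auto.
  - rewrite <- (picard_lim_0 F x0 M L h) at 2 by auto.
    replace s with (Rabs (s - 0)) at 2 by (rewrite Rminus_0_r, Rabs_right; lra).
    apply (picard_lim_lipschitz F x0 M L h); auto; rewrite ?Rabs_R0, ?Rabs_right; lra.
Qed.

Lemma smooth_on_bounded_lipschitz (f : R -> R) (a0 b0 a b : R) :
  smooth_on f a0 b0 -> a0 < a -> a <= b -> b < b0 ->
  exists K, 0 <= K /\ (forall u, a <= u <= b -> Rabs (f u) <= K) /\
    (forall u u', a <= u <= b -> a <= u' <= b -> Rabs (f u - f u') <= K * Rabs (u - u')).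
Proof.
  intros Hf Ha Hab Hb.
  assert (Hdf : forall x, a <= x <= b -> ex_derive f x) by (intros x Hx; apply (Hf 1%nat); lra).
  assert (Hcf : forall x, a <= x <= b -> continuous f x)
    by (intros; apply (ex_derive_continuous (V := R_NormedModule)); auto).
  assert (Hcdf : forall x, a <= x <= b -> continuous (Derive f) x)
    by (intros x Hx; apply (ex_derive_continuous (V := R_NormedModule)), (Hf 2%nat); lra).
  destruct (continuity_ab_maj (fun u => Rabs (f u)) a b Hab) as [m1 [Hm1 _]].
  { intros x Hx. apply continuity_pt_filterlim, (continuous_comp f Rabs); auto.
    apply continuous_Rabs. }
  destruct (continuity_ab_maj (fun u => Rabs (Derive f u)) a b Hab) as [m2 [Hm2 _]].
  { intros x Hx. apply continuity_pt_filterlim, (continuous_comp (Derive f) Rabs); auto.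
    apply continuous_Rabs. }
  exists (Rabs (f m1) + Rabs (Derive f m2)).
  pose proof (Rabs_pos (f m1)). pose proof (Rabs_pos (Derive f m2)).
  split; [lra | split].
  - intros u Hu. specialize (Hm1 u Hu). simpl in Hm1. lra.
  - intros u u' Hu Hu'.
    assert (Hseg : forall x, Rmin u' u <= x <= Rmax u' u -> a <= x <= b).
    { unfold Rmin, Rmax. destruct Rle_dec; intros; lra. }
    destruct (MVT_gen f u' u (Derive f)) as [c [Hc ->]].
    + intros x Hx. apply Derive_correct, Hdf, Hseg. lra.
    + intros x Hx. apply continuity_pt_filterlim, Hcf, Hseg, Hx.
    + rewrite Rabs_mult. specialize (Hm2 c (Hseg c Hc)). simpl in Hm2.
      apply Rmult_le_compat_r; [apply Rabs_pos | lra].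
Qed.

Lemma exists_uniform_bound (P : nat -> R -> Prop) (n N : nat) :
  (forall k x y, x <= y -> P k x -> P k y) ->
  (forall k, (n <= k <= N)%nat -> exists x, P k x) ->
  exists x, forall k, (n <= k <= N)%nat -> P k x.
Proof.
  intros Hmono. induction N as [|N IH]; intros H.
  - destruct (Nat.eq_dec n 0) as [->|Hn].
    + destruct (H 0%nat) as [x Hx]; [lia|]. exists x. intros k Hk.
      replace k with 0%nat by lia. auto.
    + exists 0. intros k Hk. lia.
  - destruct IH as [x1 Hx1]; [intros k Hk; apply H; lia|].
    destruct (Nat.le_gt_cases n (S N)) as [Hn|Hn].
    + destruct (H (S N)) as [x2 Hx2]; [lia|].
      exists (Rmax x1 x2). intros k Hk. destruct (Nat.eq_dec k (S N)) as [->|Hne].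
      * apply Hmono with x2; [apply Rmax_r | auto].
      * apply Hmono with x1; [apply Rmax_l | apply Hx1; lia].
    + exists 0. intros k Hk. lia.
Qed.

Lemma smooth_family_bounded_lipschitz (f : nat -> R -> R) (a0 b0 a b : R) (n N : nat) :
  (forall k, (n <= k <= N)%nat -> smooth_on (f k) a0 b0) -> a0 < a -> a <= b -> b < b0 ->
  exists K, 0 <= K /\ forall k, (n <= k <= N)%nat ->
    (forall u, a <= u <= b -> Rabs (f k u) <= K) /\
    (forall u u', a <= u <= b -> a <= u' <= b -> Rabs (f k u - f k u') <= K * Rabs (u - u')).
Proof.
  intros Hf Ha Hab Hb.
  destruct (exists_uniform_bound (fun k K => 0 <= K /\
      (forall u, a <= u <= b -> Rabs (f k u) <= K) /\
      (forall u u', a <= u <= b -> a <= u' <= b -> Rabs (f k u - f k u') <= K * Rabs (u - u')))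
      n N) as [K HK].
  - intros k x y Hxy [H0 [H1 H2]]. split; [lra | split].
    + intros u Hu. specialize (H1 u Hu). lra.
    + intros u u' Hu Hu'. specialize (H2 u u' Hu Hu').
      pose proof (Rabs_pos (u - u')). nra.
  - intros k Hk. apply (smooth_on_bounded_lipschitz (f k) a0 b0); auto.
  - destruct (Nat.le_gt_cases n N) as [HnN|HnN].
    + exists K. split; [apply (HK n); lia|]. intros k Hk. apply HK, Hk.
    + exists 0. split; [lra|]. intros k Hk. lia.
Qed.

Lemma Rabs_sum_n_m_le (a : nat -> R) (n m : nat) (B : R) :
  (forall k, (n <= k <= m)%nat -> Rabs (a k) <= B) ->
  Rabs (sum_n_m a n m) <= INR (S m - n) * B.
Proof.
  induction m as [|m IH]; intros H.
  - destruct (Nat.eq_dec n 0) as [->|Hn].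
    + rewrite sum_n_n. simpl. rewrite Rmult_1_l. apply H. lia.
    + rewrite sum_n_m_zero by lia. replace (S 0 - n)%nat with 0%nat by lia.
      change (Rabs 0 <= 0 * B). rewrite Rabs_R0. lra.
  - destruct (Nat.le_gt_cases n (S m)) as [Hn|Hn].
    + destruct (Nat.eq_dec n (S m)) as [->|Hne].
      * rewrite sum_n_n, Nat.sub_succ_l, Nat.sub_diag by lia. simpl.
        rewrite Rmult_1_l. apply H. lia.
      * rewrite sum_n_Sm by lia. change (Rabs (sum_n_m a n m + a (S m)) <= INR (S (S m) - n) * B).
        rewrite Nat.sub_succ_l, S_INR by lia.
        pose proof (Rabs_triang (sum_n_m a n m) (a (S m))).
        pose proof (IH ltac:(intros; apply H; lia)). pose proof (H (S m) ltac:(lia)). lra.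
    + rewrite sum_n_m_zero by lia. replace (S (S m) - n)%nat with 0%nat by lia.
      change (Rabs 0 <= 0 * B). rewrite Rabs_R0. lra.
Qed.

Lemma sum_n_m_minus_R (a b : nat -> R) (n m : nat) :
  sum_n_m (fun k => a k - b k) n m = sum_n_m a n m - sum_n_m b n m.
Proof.
  transitivity (sum_n_m (fun k => plus (a k) (mult (-1) (b k))) n m).
  - apply sum_n_m_ext. intros k. change (a k - b k = a k + -1 * b k). ring.
  - rewrite (sum_n_m_plus (G := R_AbelianMonoid)), (sum_n_m_mult_l (K := R_Ring)).
    change (sum_n_m a n m + -1 * sum_n_m b n m = sum_n_m a n m - sum_n_m b n m). ring.
Qed.

Lemma continuous_sum_n_m (f : nat -> R -> R) (n m : nat) (s : R) :
  (forall k, (n <= k <= m)%nat -> continuous (f k) s) ->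
  continuous (fun s => sum_n_m (fun k => f k s) n m) s.
Proof.
  induction m as [|m IH]; intros H.
  - destruct (Nat.eq_dec n 0) as [->|Hn].
    + apply (continuous_ext (f 0%nat)); [intros; rewrite sum_n_n; auto | apply H; lia].
    + apply (continuous_ext (fun _ => 0)); [intros; rewrite sum_n_m_zero by lia; auto|].
      apply continuous_const.
  - destruct (Nat.le_gt_cases n (S m)) as [Hn|Hn].
    + apply (continuous_ext (fun s => plus (sum_n_m (fun k => f k s) n m) (f (S m) s))).
      { intros; rewrite sum_n_Sm by lia; auto. }
      apply (continuous_plus (V := R_NormedModule)); [apply IH; intros | ]; apply H; lia.
    + apply (continuous_ext (fun _ => 0)); [intros; rewrite sum_n_m_zero by lia; auto|].
      apply continuous_const.
Qed.

Definition clamp (lo hi u : R) : R := Rmax lo (Rmin hi u).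

Lemma clamp_lipschitz lo hi u u' : Rabs (clamp lo hi u - clamp lo hi u') <= Rabs (u - u').
Proof.
  unfold clamp, Rmax, Rmin.
  destruct (Rle_dec hi u); destruct (Rle_dec hi u');
  repeat (match goal with |- context [Rle_dec ?a ?b] => destruct (Rle_dec a b) end);
  unfold Rabs; repeat destruct Rcase_abs; lra.
Qed.

Lemma clamp_in lo hi u : lo <= hi -> lo <= clamp lo hi u <= hi.
Proof.
  intros H. unfold clamp, Rmax, Rmin. destruct (Rle_dec hi u);
  repeat (match goal with |- context [Rle_dec ?a ?b] => destruct (Rle_dec a b) end); lra.
Qed.

Lemma clamp_id lo hi u : lo <= u <= hi -> clamp lo hi u = u.
Proof.
  intros H. unfold clamp, Rmax, Rmin. destruct (Rle_dec hi u);
  repeat (match goal with |- context [Rle_dec ?a ?b] => destruct (Rle_dec a b) end); lra.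
Qed.

Lemma continuous_clamp lo hi x : continuous (clamp lo hi) x.
Proof.
  apply (lipschitz_continuous _ (Rabs x + 1) 1); try lra.
  intros. rewrite Rmult_1_l. apply clamp_lipschitz.
Qed.

Lemma pow_unit_interval (c : R) (m : nat) : 0 <= c <= 1 -> 0 <= c ^ m <= 1.
Proof. intros Hc. split; [apply pow_le; lra | rewrite <- (pow1 m); apply pow_incr; lra]. Qed.

Lemma continuous_pow (m : nat) (x : R) : continuous (fun y => y ^ m) x.
Proof.
  apply (ex_derive_continuous (V := R_NormedModule)), (ex_derive_pow (fun y => y)).
  apply ex_derive_id.
Qed.

Lemma tpow_substitution (t : R) (k q : nat) : 0 < t -> (1 <= q)%nat -> (q < k)%nat ->
  tpow t k q = Rpower t (- (1 / INR q) - 1) * Rpower t (- (1 / INR q)) ^ (k - q - 1).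
Proof.
  intros Ht Hq Hk. assert (0 < INR q) by (apply lt_0_INR; lia).
  unfold tpow. rewrite <- Rpower_pow by apply exp_pos.
  rewrite Rpower_mult, <- Rpower_plus. f_equal.
  rewrite !minus_INR by lia. simpl. field. lra.
Qed.

Lemma Rpower_opp_inv_lt (h r t : R) : 0 < h -> 0 < r -> Rpower h (- r) < t ->
  Rpower t (- (1 / r)) < h.
Proof.
  intros Hh Hr Ht. assert (Ht0 : 0 < t) by (pose proof (exp_pos (- r * ln h)); unfold Rpower in Ht; lra).
  apply ln_increasing in Ht; [|apply exp_pos]. unfold Rpower in *. rewrite ln_exp in Ht.
  rewrite <- (exp_ln h Hh). apply exp_increasing.
  apply (Rmult_lt_reg_l r); auto.
  replace (r * (- (1 / r) * ln t)) with (- ln t) by (field; lra). nra.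
Qed.

Lemma exists_small_step (C d : R) : 0 <= C -> 0 < d ->
  exists h, 0 < h /\ h <= 1 /\ C * h <= d /\ C * h <= 1/2.
Proof.
  intros HC Hd. set (m := Rmin 1 (Rmin d (1/2))).
  assert (Hm : 0 < m /\ m <= 1 /\ m <= d /\ m <= 1/2).
  { unfold m. pose proof (Rmin_l 1 (Rmin d (1/2))). pose proof (Rmin_r 1 (Rmin d (1/2))).
    pose proof (Rmin_l d (1/2)). pose proof (Rmin_r d (1/2)).
    repeat split; try lra. repeat apply Rmin_pos; lra. }
  assert (HCm : C * (m / (C + 1)) <= m).
  { apply (Rmult_le_reg_r (C + 1)); [lra|].
    replace (C * (m / (C + 1)) * (C + 1)) with (C * m) by (field; lra). nra. }
  assert (Hh : m / (C + 1) <= m).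
  { apply (Rmult_le_reg_r (C + 1)); [lra|].
    replace (m / (C + 1) * (C + 1)) with m by (field; lra). nra. }
  exists (m / (C + 1)). repeat split; try lra. apply Rdiv_lt_0_compat; lra.
Qed.

Section Substituted_field.

Variables (Lam : nat -> R -> R) (q n N : nat) (lo hi : R).

(* The exponents [k - q - 1] are genuine (not truncated) because [k >= n > q]; clamping [s]
   to [[0,1]] and [u] to [[lo,hi]] makes the field globally bounded and Lipschitz. *)
Definition substituted_field (s u : R) : R :=
  - INR q * sum_n_m (fun k => clamp 0 1 s ^ (k - q - 1) * Lam k (clamp lo hi u)) n N.

Lemma is_derive_substitution (w : R -> R) (t s : R) :
  (1 <= q)%nat -> (q < n)%nat -> 0 < t -> s = Rpower t (- (1 / INR q)) ->
  s <= 1 -> lo <= w s <= hi -> is_derive w s (substituted_field s (w s)) ->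
  is_derive (fun t => w (Rpower t (- (1 / INR q)))) t (avg_rhs Lam q n N t (w s)).
Proof.
  intros Hq Hqn Ht Hs Hs1 Hw Hder. assert (Hq0 : 0 < INR q) by (apply lt_0_INR; lia).
  assert (Hsd : is_derive (fun t => Rpower t (- (1 / INR q))) t
                  (- (1 / INR q) * Rpower t (- (1 / INR q) - 1)))
    by (apply is_derive_Reals, derivable_pt_lim_power, Ht).
  subst s. pose proof (is_derive_comp w _ t _ _ Hder Hsd) as Hcomp.
  set (s := Rpower t (- (1 / INR q))) in *.
  assert (Hs0 : 0 < s) by apply exp_pos.
  unfold substituted_field in Hcomp.
  rewrite (clamp_id 0 1 s), (clamp_id lo hi (w s)) in Hcomp by lra.
  replace (avg_rhs Lam q n N t (w s)) with
    (scal (- (1 / INR q) * Rpower t (- (1 / INR q) - 1))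
       (- INR q * sum_n_m (fun k => s ^ (k - q - 1) * Lam k (w s)) n N)); [exact Hcomp|].
  change (scal ?a ?b) with (a * b). unfold avg_rhs.
  replace (- (1 / INR q) * Rpower t (- (1 / INR q) - 1) *
           (- INR q * sum_n_m (fun k => s ^ (k - q - 1) * Lam k (w s)) n N))
    with (Rpower t (- (1 / INR q) - 1) * sum_n_m (fun k => s ^ (k - q - 1) * Lam k (w s)) n N)
    by (field; lra).
  rewrite <- (sum_n_m_mult_l (K := R_Ring)). apply sum_n_m_ext_loc. intros k Hk.
  rewrite (tpow_substitution t k q) by (lra || lia).
  symmetry. apply Rmult_assoc.
Qed.

Variable K : R.
Hypothesis K_ge0 : 0 <= K.
Hypothesis Lam_bounded :
  forall k, (n <= k <= N)%nat -> forall u, lo <= u <= hi -> Rabs (Lam k u) <= K.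
Hypothesis Lam_lipschitz : forall k, (n <= k <= N)%nat -> forall u u',
  lo <= u <= hi -> lo <= u' <= hi -> Rabs (Lam k u - Lam k u') <= K * Rabs (u - u').
Hypothesis lo_le_hi : lo <= hi.

Lemma Lam_clamp_lipschitz k u u' : (n <= k <= N)%nat ->
  Rabs (Lam k (clamp lo hi u) - Lam k (clamp lo hi u')) <= K * Rabs (u - u').
Proof.
  intros Hk. eapply Rle_trans; [apply Lam_lipschitz; auto; apply clamp_in, lo_le_hi|].
  apply Rmult_le_compat_l; auto. apply clamp_lipschitz.
Qed.

Lemma substituted_field_bounded s u :
  Rabs (substituted_field s u) <= INR q * (INR (S N - n) * K).
Proof.
  unfold substituted_field. rewrite Rabs_mult, Rabs_Ropp, Rabs_right by apply Rle_ge, pos_INR.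
  apply Rmult_le_compat_l; [apply pos_INR|]. apply Rabs_sum_n_m_le. intros k Hk.
  rewrite Rabs_mult. pose proof (pow_unit_interval (clamp 0 1 s) (k - q - 1) (clamp_in 0 1 s ltac:(lra))).
  rewrite (Rabs_right (_ ^ _)) by lra.
  pose proof (Lam_bounded k Hk (clamp lo hi u) (clamp_in lo hi u lo_le_hi)).
  pose proof (Rabs_pos (Lam k (clamp lo hi u))). nra.
Qed.

Lemma substituted_field_lipschitz s u u' :
  Rabs (substituted_field s u - substituted_field s u') <=
  INR q * (INR (S N - n) * K) * Rabs (u - u').
Proof.
  unfold substituted_field. rewrite <- Rmult_minus_distr_l, <- sum_n_m_minus_R.
  rewrite Rabs_mult, Rabs_Ropp, Rabs_right by apply Rle_ge, pos_INR.
  rewrite !Rmult_assoc. apply Rmult_le_compat_l; [apply pos_INR|].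
  apply Rabs_sum_n_m_le. intros k Hk.
  rewrite <- Rmult_minus_distr_l, Rabs_mult.
  pose proof (pow_unit_interval (clamp 0 1 s) (k - q - 1) (clamp_in 0 1 s ltac:(lra))).
  rewrite (Rabs_right (_ ^ _)) by lra.
  pose proof (Lam_clamp_lipschitz k u u' Hk).
  pose proof (Rabs_pos (Lam k (clamp lo hi u) - Lam k (clamp lo hi u'))). nra.
Qed.

Lemma substituted_field_continuous (g : R -> R) s :
  continuous g s -> continuous (fun s => substituted_field s (g s)) s.
Proof.
  intros Hg. unfold substituted_field.
  apply (continuous_mult (K := R_AbsRing) (fun _ => - INR q)); [apply continuous_const|].
  apply (continuous_sum_n_m (fun k s => clamp 0 1 s ^ (k - q - 1) * Lam k (clamp lo hi (g s)))).
  intros k Hk. apply (continuous_mult (K := R_AbsRing)).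
  - apply (continuous_comp (clamp 0 1) (fun y => y ^ (k - q - 1))).
    + apply continuous_clamp.
    + apply continuous_pow.
  - apply (continuous_comp g (fun u => Lam k (clamp lo hi u))); auto.
    apply (lipschitz_continuous _ (Rabs (g s) + 1) K); auto; [|lra].
    intros; apply Lam_clamp_lipschitz, Hk.
Qed.

End Substituted_field.

Theorem lemma4 (q p n N : nat) (E0 : R) (Lam : nat -> R -> R)
  (hq : (1 <= q)%nat) (hp : (1 <= p)%nat) (hE0 : 0 < E0)
  (hqn : (q < n)%nat) (hn2p : (n <= 2 * p)%nat)
  (hsmooth : forall k : nat, (1 <= k)%nat -> smooth_on (Lam k) 0 E0)
  (hvanish : forall (k : nat) (E : R), (1 <= k)%nat -> (k < n)%nat ->
               0 < E <= E0 -> Lam k E = 0)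
  (hnz : exists E : R, 0 < E <= E0 /\ Lam n E <> 0)
  (hN : (2 * p <= N <= 4 * p)%nat)
  (xi : R) (hxi : 0 < xi < E0)
  (hL : Lam n xi <> 0) (hL' : Derive (Lam n) xi < 0) :
  exists (T C : R) (v : R -> R),
    0 < T /\
    forall t : R, T < t ->
      0 < v t < E0 /\
      is_derive v t (avg_rhs Lam q n N t (v t)) /\
      Rabs (v t - xi) <= C * Rpower t (- (1 / INR q)).
Proof.
  set (d := Rmin xi (E0 - xi) / 2).
  assert (Hd : 0 < d /\ 0 < xi - d /\ xi + d < E0).
  { pose proof (Rmin_l xi (E0 - xi)). pose proof (Rmin_r xi (E0 - xi)).
    assert (0 < Rmin xi (E0 - xi)) by (apply Rmin_pos; lra). unfold d; lra. }
  destruct (smooth_family_bounded_lipschitz Lam 0 E0 (xi - d) (xi + d) n N)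
    as [K [HK0 HK]]; try lra.
  { intros k Hk. apply hsmooth. lia. }
  set (C := INR q * (INR (S N - n) * K)).
  assert (HC : 0 <= C) by (apply Rmult_le_pos, Rmult_le_pos; auto; apply pos_INR).
  destruct (exists_small_step C d HC) as [h [Hh0 [Hh1 [HCd HCh]]]]; [lra|].
  set (G := substituted_field Lam q n N (xi - d) (xi + d)).
  assert (HLam_b := fun k Hk => proj1 (HK k Hk)).
  assert (HLam_l := fun k Hk => proj2 (HK k Hk)).
  destruct (picard_existence G xi C C h) as [w Hw]; auto.
  - intros; apply (substituted_field_bounded _ _ _ _ _ _ K); auto; lra.
  - intros; apply (substituted_field_lipschitz _ _ _ _ _ _ K); auto; lra.
  - intros; apply (substituted_field_continuous _ _ _ _ _ _ K); auto; lra.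
  - exists (Rpower h (- INR q)), C, (fun t => w (Rpower t (- (1 / INR q)))).
    split; [apply exp_pos|]. intros t Ht.
    assert (Ht0 : 0 < t) by (pose proof (exp_pos (- INR q * ln h)); unfold Rpower in Ht; lra).
    set (s := Rpower t (- (1 / INR q))).
    assert (Hs : 0 < s < h).
    { split; [apply exp_pos | apply Rpower_opp_inv_lt; auto; apply lt_0_INR; lia]. }
    destruct (Hw s Hs) as [Hder Hbd].
    assert (Hwd : Rabs (w s - xi) <= d) by (eapply Rle_trans; [apply Hbd | nra]).
    apply Rabs_le_between in Hwd.
    split; [lra | split; [|exact Hbd]].
    apply (is_derive_substitution Lam q n N (xi - d) (xi + d)); auto; lra.
Qed.
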